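(* Let $R$ be a commutative ring, $S$ a multiplicative subset of $R$, and $E$ an $R$-module. The following are equivalent: (1) $E$ is $u$-$S$-injective; (2) for every short exact sequence $0\to A\xrightarrow{f}B\xrightarrow{g}C\to0$ of $R$-modules, the induced sequence $0\to\mathrm{Hom}_R(C,E)\xrightarrow{g^*}\mathrm{Hom}_R(B,E)\xrightarrow{f^*}\mathrm{Hom}_R(A,E)\to0$ is $u$-$S$-exact; (3) $\mathrm{Ext}^1_R(M,E)$ is $u$-$S$-torsion for every $R$-module $M$; (4) $\mathrm{Ext}^n_R(M,E)$ is $u$-$S$-torsion for every $R$-module $M$ and every $n\ge1$.
   Context: An $R$-module $T$ is $u$-$S$-torsion if $sT=0$ for some $s\in S$. A sequence $M\xrightarrow{f}N\xrightarrow{g}L$ is $u$-$S$-exact at $N$ if there is $s\in S$ with $s\,\mathrm{Ker}(g)\subseteq\mathrm{Im}(f)$ and $s\,\mathrm{Im}(f)\subseteq\mathrm{Ker}(g)$; a short sequence is $u$-$S$-exact if $u$-$S$-exact at every term. $E$ is $u$-$S$-injective if for every $u$-$S$-exact sequence $0\to A\to B\to C\to0$ the induced sequence $0\to\mathrm{Hom}_R(C,E)\to\mathrm{Hom}_R(B,E)\to\mathrm{Hom}_R(A,E)\to0$ is $u$-$S$-exact. *)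

From HB Require Import structures.
From mathcomp Require Import all_boot all_order all_algebra.
Set Implicit Arguments. Unset Strict Implicit. Unset Printing Implicit Defensive.
Import GRing.Theory.
Local Open Scope ring_scope.

(* R-modules over a commutative ring R are [lmodType R]; R-linear maps are
   [{linear A -> B}]; Hom_R(A,E) is the R-module of such maps with pointwise
   operations (scalar action (s.phi)(x) = s *: phi x). *)

Section UScats.
Variable R : comPzRingType.

Definition mult_subset (S : {pred R}) : Prop :=
  1 \in S /\ forall a b, a \in S -> b \in S -> a * b \in S.

Definition uS_exact_short (S : {pred R}) (A B C : lmodType R)
  (f : {linear A -> B}) (g : {linear B -> C}) : Prop :=
  (* at A : s Ker f \subseteq Im 0 = 0 *)
  (exists2 s, s \in S & forall a, f a = 0 -> s *: a = 0) /\
  (* at B : s Ker g \subseteq Im f  and  s Im f \subseteq Ker g *)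
  (exists2 s, s \in S &
     (forall b, g b = 0 -> exists a, s *: b = f a) /\
     (forall a, g (s *: f a) = 0)) /\
  (* at C : s C = s Ker 0 \subseteq Im g *)
  (exists2 s, s \in S & forall c, exists b, s *: c = g b).

Definition short_exact (A B C : lmodType R)
  (f : {linear A -> B}) (g : {linear B -> C}) : Prop :=
  injective f /\ (forall b, g b = 0 <-> exists a, b = f a) /\
  (forall c, exists b, c = g b).

(* u-S-exactness of 0 -> Hom(C,E) -g^*-> Hom(B,E) -f^*-> Hom(A,E) -> 0,
   where g^* phi = phi o g and f^* psi = psi o f; written out in Hom-modules *)
Definition uS_exact_Hom (S : {pred R}) (E A B C : lmodType R)
  (f : {linear A -> B}) (g : {linear B -> C}) : Prop :=
  (* at Hom(C,E) : s Ker g^* = 0 *)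
  (exists2 s, s \in S & forall phi : {linear C -> E},
      (forall b, phi (g b) = 0) -> forall c, s *: phi c = 0) /\
  (* at Hom(B,E) : s Ker f^* \subseteq Im g^*, s Im g^* \subseteq Ker f^* *)
  (exists2 s, s \in S &
     (forall psi : {linear B -> E}, (forall a, psi (f a) = 0) ->
        exists phi : {linear C -> E}, forall b, s *: psi b = phi (g b)) /\
     (forall (phi : {linear C -> E}) a, s *: phi (g (f a)) = 0)) /\
  (* at Hom(A,E) : s Hom(A,E) \subseteq Im f^* *)
  (exists2 s, s \in S & forall chi : {linear A -> E},
      exists psi : {linear B -> E}, forall a, s *: chi a = psi (f a)).

Definition uS_injective (S : {pred R}) (E : lmodType R) : Prop :=
  forall (A B C : lmodType R) (f : {linear A -> B}) (g : {linear B -> C}),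
    uS_exact_short S f g -> uS_exact_Hom S E f g.

Definition projective (P : lmodType R) : Prop :=
  forall (X Y : lmodType R) (p : {linear X -> Y}) (h : {linear P -> Y}),
    (forall y, exists x, p x = y) ->
    exists k : {linear P -> X}, forall x, p (k x) = h x.

(* projective resolution  ... -> P 2 -d 1-> P 1 -d 0-> P 0 -eps-> M -> 0 *)
Record proj_resolution (M : lmodType R) := ProjRes {
  pr_mod : nat -> lmodType R;
  pr_d : forall n, {linear pr_mod n.+1 -> pr_mod n};
  pr_eps : {linear pr_mod 0 -> M};
  pr_proj : forall n, projective (pr_mod n);
  pr_eps_surj : forall m, exists x, pr_eps x = m;
  pr_exact0 : forall x, pr_eps x = 0 <-> exists y, x = pr_d 0 y;
  pr_exact : forall n x, pr_d n x = 0 <-> exists y, x = pr_d n.+1 y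
}.

(* Ext^{k+1}_R(M,E) = H^{k+1}(Hom_R(P_., E)) = Ker delta^{k+1} / Im delta^k,
   delta^n phi = phi o d_n.  "Ext^{k+1}_R(M,E) is u-S-torsion", i.e.
   s.Ext = 0 for some s in S, means s Ker delta^{k+1} \subseteq Im delta^k.
   Computed with an arbitrary projective resolution of M (the result is
   independent of the resolution up to isomorphism). *)
Definition Ext_uS_torsion (S : {pred R}) (k : nat) (M E : lmodType R) : Prop :=
  forall r : proj_resolution M,
  exists2 s, s \in S &
    forall phi : {linear pr_mod r k.+1 -> E},
      (forall y, phi (pr_d r k.+1 y) = 0) ->
      exists psi : {linear pr_mod r k -> E},
        forall x, s *: phi x = psi (pr_d r k x).

End UScats.

From HB Require Import structures.
From mathcomp Require Import all_boot all_order all_algebra finmap.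
From mathcomp.multinomials Require Import monalg.
From Stdlib Require Import IndefiniteDescription.
Set Implicit Arguments. Unset Strict Implicit. Unset Printing Implicit Defensive.
Import GRing.Theory.
Local Open Scope ring_scope.

(* (1) => (2) is formal, since a short exact sequence is u-S-exact with s = 1.
   For (2) => (3), a 1-cocycle on P_1 factors through the syzygy
   K = Ker(P_0 -> M), and the u-S-surjectivity of Hom(P_0,E) -> Hom(K,E)
   makes s times it a coboundary.  Truncating a projective resolution of M
   gives one of K, and this dimension shift yields (3) => (4).
   For (3) => (1), exactness of the Hom-sequence at Hom(C,E) and Hom(B,E) only
   uses the constants of the u-S-exact sequence 0 -> A -> B -> C -> 0.  At
   Hom(A,E), lift a projective resolution of C along g and f to maps
   a0 : P_0 -> B and a1 : P_1 -> A; then chi o a1 is (up to s1) a 1-cocycle,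
   t times it is a coboundary psi0 o d_0, and t chi and psi0 glue to a map on
   B, which is covered by P_0 (+) A.  Free modules provide the resolution. *)

Section LinearMaps.
Variable R : comPzRingType.

Definition mkLinear (U V : lmodType R) (h : U -> V) (hlin : linear h) :
  {linear U -> V} := HB.pack h (GRing.isLinear.Build R U V *:%R h hlin).

Lemma linear_of_relation (B X E : lmodType R) (Rel : B -> X -> Prop) (F : X -> E) :
  linear F ->
  (forall b, exists x, Rel b x) ->
  (forall a b b' x x', Rel b x -> Rel b' x' -> Rel (a *: b + b') (a *: x + x')) ->
  (forall b x x', Rel b x -> Rel b x' -> F x = F x') ->
  exists L : {linear B -> E}, forall b x, Rel b x -> L b = F x.
Proof.
move=> Flin total compat well_def.
have [w Rel_w] := functional_choice Rel total.
have wlin : linear (fun b => F (w b)).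
  move=> a b b'; rewrite -Flin; apply: well_def; first exact: Rel_w.
  by apply: compat; apply: Rel_w.
by exists (mkLinear wlin) => b x Rel_bx; apply: well_def (Rel_w b) Rel_bx.
Qed.

Lemma factor_through_surjection (X Y E : lmodType R)
    (p : {linear X -> Y}) (phi : {linear X -> E}) :
  (forall y, exists x, p x = y) -> (forall x, p x = 0 -> phi x = 0) ->
  exists chi : {linear Y -> E}, forall x, chi (p x) = phi x.
Proof.
move=> p_surj phi_ker.
have [chi chiP] : exists chi : {linear Y -> E},
    forall y x, p x = y -> chi y = phi x.
  apply: (linear_of_relation (Rel := fun y x => p x = y)) => //.
  - exact: linearP.
  - by move=> a y y' x x' <- <-; rewrite linearP.
  - move=> y x x' px px'; apply/eqP; rewrite -subr_eq0 -linearB.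
    by rewrite phi_ker // linearB px px' subrr.
by exists chi => x; apply: chiP.
Qed.

End LinearMaps.

Section Kernel.
Variables (R : comPzRingType) (U V : lmodType R) (h : {linear U -> V}).

Definition ker_pred : {pred U} := fun x => h x == 0.

Lemma mem_ker_pred x : h x = 0 -> x \in ker_pred.
Proof. by rewrite unfold_in /ker_pred => ->. Qed.

Lemma ker_submod_closed : GRing.submod_closed ker_pred.
Proof.
split; first exact/mem_ker_pred/linear0.
by move=> a u v; rewrite !unfold_in /ker_pred linearP => /eqP-> /eqP->; rewrite scaler0 addr0.
Qed.

HB.instance Definition _ := GRing.isSubmodClosed.Build R U ker_pred ker_submod_closed.

Definition kermod := {x : U | x \in ker_pred}.
HB.instance Definition _ := SubChoice.on kermod.
HB.instance Definition _ := [SubChoice_isSubLmodule of kermod by <:].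

Lemma kerval_linear : linear (val : kermod -> U). Proof. by []. Qed.

Definition kerval : {linear kermod -> U} := mkLinear kerval_linear.

Lemma kervalP x : h (kerval x) = 0.
Proof. by case: x => x /= /eqP. Qed.

Lemma kerval_inj : injective kerval.
Proof. exact: val_inj. Qed.

Definition ker_elem x (hx : h x = 0) : kermod := exist _ x (mem_ker_pred hx).

End Kernel.

Section FreeModule.
Variables (R : comPzRingType) (K : choiceType).

Definition free_mod := {malg R[K]}.
HB.instance Definition _ := GRing.Zmodule.on free_mod.

(* [monalg] only provides the module structure over nontrivial rings. *)
Definition free_scale (c : R) (g : free_mod) : free_mod :=
  [malg k in msupp g => c * g@_k].

Lemma free_scaleE c g k : (free_scale c g)@_k = c * g@_k.
Proof. by rewrite mcoeffE; case: msuppP; rewrite ?mulr0. Qed.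

Lemma free_scaleA c1 c2 g : free_scale c1 (free_scale c2 g) = free_scale (c1 * c2) g.
Proof. by apply/malgP => k; rewrite !free_scaleE mulrA. Qed.

Lemma free_scale1 g : free_scale 1 g = g.
Proof. by apply/malgP => k; rewrite free_scaleE mul1r. Qed.

Lemma free_scaleDr c g1 g2 : free_scale c (g1 + g2) = free_scale c g1 + free_scale c g2.
Proof. by apply/malgP => k; rewrite !(mcoeffD, free_scaleE) mulrDr. Qed.

Lemma free_scaleDl g c1 c2 : free_scale (c1 + c2) g = free_scale c1 g + free_scale c2 g.
Proof. by apply/malgP => k; rewrite !(mcoeffD, free_scaleE) mulrDl. Qed.

HB.instance Definition _ := GRing.Zmodule_isLmodule.Build R free_mod
  free_scaleA free_scale1 free_scaleDr free_scaleDl.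

Definition free_basis (k : K) : free_mod := << (1 : R) *g k >>.

Lemma free_decomp (g : free_mod) : g = \sum_(k <- msupp g) g@_k *: free_basis k.
Proof.
rewrite {1}[g]monalgE; apply: eq_bigr => k _.
by apply/malgP => k'; rewrite free_scaleE !mcoeffU mulrnAr mulr1.
Qed.

Lemma free_linear_eq (V : lmodType R) (L1 L2 : {linear free_mod -> V}) :
  (forall k, L1 (free_basis k) = L2 (free_basis k)) -> L1 =1 L2.
Proof.
move=> eqL g; rewrite (free_decomp g) !linear_sum; apply: eq_bigr => k _.
by rewrite !linearZ eqL.
Qed.

Section Lift.
Variables (V : lmodType R) (phi : K -> V).

Definition free_lift_fun (g : free_mod) : V := \sum_(k <- msupp g) g@_k *: phi k.

Lemma free_lift_funEw (d : {fset K}) g : (msupp g `<=` d)%fset ->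
  free_lift_fun g = \sum_(k <- d) g@_k *: phi k.
Proof.
move=> le_gd; rewrite [LHS](big_fset_incl _ le_gd) => //= k _ /mcoeff_outdom ->.
by rewrite scale0r.
Qed.

Lemma free_lift_linear : linear free_lift_fun.
Proof.
move=> a g1 g2.
pose d := (msupp g1 `|` msupp g2 `|` msupp (a *: g1 + g2))%fset.
have d1 : (msupp g1 `<=` d)%fset by rewrite /d -fsetUA fsubsetUl.
have d2 : (msupp g2 `<=` d)%fset by rewrite /d fsetUAC fsubsetUr.
have d3 : (msupp (a *: g1 + g2) `<=` d)%fset by rewrite /d fsubsetUr.
rewrite (free_lift_funEw d1) (free_lift_funEw d2) (free_lift_funEw d3).
rewrite scaler_sumr -big_split /=; apply: eq_bigr => k _.
by rewrite mcoeffD free_scaleE scalerDl scalerA.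
Qed.

Definition free_lift : {linear free_mod -> V} := mkLinear free_lift_linear.

Lemma free_lift_basis k : free_lift (free_basis k) = phi k.
Proof.
rewrite /= (@free_lift_funEw [fset k]%fset) ?msuppU_le //.
by rewrite big_seq_fset1 mcoeffUU scale1r.
Qed.

Lemma free_lift_eq0 g : (forall k, phi k = 0) -> free_lift g = 0.
Proof. by move=> phi0; rewrite /= /free_lift_fun big1 // => k _; rewrite phi0 scaler0. Qed.

End Lift.

Lemma free_lift_comp (V W : lmodType R) (phi : K -> V) (L : {linear V -> W}) g :
  L (free_lift phi g) = free_lift (L \o phi) g.
Proof.
apply: (free_linear_eq (L1 := L \o free_lift phi)) => k.
by rewrite [LHS](congr1 L (free_lift_basis phi k)) free_lift_basis.
Qed.

Lemma free_projective : projective free_mod.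
Proof.
move=> X Y p h p_surj.
have [x xP] := functional_choice _ (fun k => p_surj (h (free_basis k))).
exists (free_lift x); apply: (free_linear_eq (L1 := p \o free_lift x)) => k.
by rewrite [LHS](congr1 p (free_lift_basis x k)) xP.
Qed.

End FreeModule.

Section Resolutions.
Variable R : comPzRingType.

Lemma projective_lift (P X Y : lmodType R) (p : {linear X -> Y}) (h : {linear P -> Y}) :
  projective P -> (forall y, exists x, p x = h y) ->
  exists k : {linear P -> X}, forall y, p (k y) = h y.
Proof.
move=> P_proj h_im.
have qlin : linear (fun z : X * P => p z.1 - h z.2).
  by move=> a z z'; rewrite /= (linearP p) (linearP h) scalerBr opprD addrACA.
pose Z := kermod (mkLinear qlin).
have pilin : linear (fun z : Z => (kerval _ z).2) by [].
have pi_surj (y : P) : exists z, mkLinear pilin z = idfun y.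
  have [x px] := h_im y.
  have qx : mkLinear qlin (x, y) = 0 by rewrite /= px subrr.
  by exists (ker_elem qx).
have [k' k'P] := P_proj _ _ _ idfun pi_surj.
have klin : linear (fun y => (kerval _ (k' y)).1).
  by move=> a y y'; rewrite linearP.
exists (mkLinear klin) => y /=.
have /eqP := kervalP (k' y); rewrite subr_eq0 => /eqP /= ->.
by have /= -> := k'P y.
Qed.

Lemma syzygy_exact (P Q : lmodType R) (d : {linear P -> Q}) x :
  d x = 0 <-> exists y, x = free_lift (kerval d) y.
Proof.
split=> [dx | [y ->]].
  by exists (free_basis R (ker_elem dx)); rewrite free_lift_basis.
by rewrite free_lift_comp; apply: free_lift_eq0 => k; apply: kervalP.
Qed.

(* [free_stage M n] is the differential P_n -> P_(n-1) of the free resolution of M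
   (P_(-1) = M), P_(n+1) being free on the kernel of the previous differential. *)
Definition res_stage := {P : lmodType R & {Q : lmodType R & {linear P -> Q}}}.

Definition syzygy_stage (st : res_stage) : res_stage :=
  existT _ (free_mod R (kermod (projT2 (projT2 st))) : lmodType R)
    (existT _ (projT1 st) (free_lift (kerval (projT2 (projT2 st))))).

Fixpoint free_stage (M : lmodType R) (n : nat) : res_stage :=
  if n is n'.+1 then syzygy_stage (free_stage M n')
  else existT _ (free_mod R M : lmodType R) (existT _ M (free_lift (@id M))).

Definition free_res_mod M n : lmodType R := projT1 (free_stage M n).
Definition free_res_d M n : {linear free_res_mod M n.+1 -> free_res_mod M n} :=
  projT2 (projT2 (free_stage M n.+1)).
Definition free_res_eps M : {linear free_res_mod M 0 -> M} :=
  projT2 (projT2 (free_stage M 0)).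

Lemma free_res_proj (M : lmodType R) n : projective (free_res_mod M n).
Proof. by case: n => [|n]; apply: free_projective. Qed.

Lemma free_res_eps_surj (M : lmodType R) (m : M) : exists x, free_res_eps M x = m.
Proof. by exists (free_basis R m); apply: free_lift_basis. Qed.

Definition free_resolution (M : lmodType R) : proj_resolution M :=
  @ProjRes R M (free_res_mod M) (@free_res_d M) (@free_res_eps M) (@free_res_proj M)
    (@free_res_eps_surj M) (syzygy_exact (@free_res_eps M))
    (fun n => syzygy_exact (@free_res_d M n)).

Section ResolutionKernel.
Variables (M : lmodType R) (r : proj_resolution M).

Lemma pr_eps_d y : pr_eps r (pr_d r 0 y) = 0.
Proof. by apply/pr_exact0; exists y. Qed.

Lemma pr_dd n z : pr_d r n (pr_d r n.+1 z) = 0.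
Proof. by apply/pr_exact; exists z. Qed.

Lemma res_cover_linear : linear (fun y => ker_elem (pr_eps_d y)).
Proof. by move=> a y y'; apply: kerval_inj; rewrite /= linearP. Qed.

Definition res_cover : {linear pr_mod r 1 -> kermod (pr_eps r)} := mkLinear res_cover_linear.

Lemma res_coverE y : kerval _ (res_cover y) = pr_d r 0 y.
Proof. by []. Qed.

Lemma res_cover_surj m : exists y, res_cover y = m.
Proof.
have [y dy] := (@pr_exact0 _ _ r (kerval _ m)).1 (kervalP m).
by exists y; apply: kerval_inj; rewrite res_coverE dy.
Qed.

Lemma res_cover_ker y : res_cover y = 0 <-> exists z, y = pr_d r 1 z.
Proof.
rewrite -(@pr_exact _ _ r 0 y) -res_coverE; split=> [-> | ]; first exact: linear0.
by move=> dy; apply: kerval_inj; rewrite dy linear0.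
Qed.

Definition ker_resolution : proj_resolution (kermod (pr_eps r)) :=
  @ProjRes R _ (fun n => pr_mod r n.+1) (fun n => pr_d r n.+1) res_cover
    (fun n => @pr_proj _ _ r n.+1) res_cover_surj res_cover_ker (fun n => @pr_exact _ _ r n.+1).

Lemma kerval_short_exact : short_exact (kerval (pr_eps r)) (pr_eps r).
Proof.
split; [exact: kerval_inj | split => [x | c]].
  split=> [ex | [m ->]]; [by exists (ker_elem ex) | exact: kervalP].
by have [x <-] := pr_eps_surj r c; exists x.
Qed.

End ResolutionKernel.
End Resolutions.

Lemma short_exact_uS_exact (R : comPzRingType) (S : {pred R}) (A B C : lmodType R)
    (f : {linear A -> B}) (g : {linear B -> C}) :
  1 \in S -> short_exact f g -> uS_exact_short S f g.
Proof.
move=> S1 [f_inj [g_ker g_surj]]; split; [|split]; exists 1; try exact: S1.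
- by move=> a fa; rewrite scale1r; apply: f_inj; rewrite fa linear0.
- split=> [b /g_ker[a ->] | a]; first by exists a; rewrite scale1r.
  by rewrite scale1r; apply/g_ker; exists a.
- by move=> c; have [b ->] := g_surj c; exists b; rewrite scale1r.
Qed.

Section HomSequence.
Variables (R : comPzRingType) (E A B C : lmodType R).
Variables (f : {linear A -> B}) (g : {linear B -> C}) (s1 s2 s3 : R).
Hypotheses (f_ker : forall a, f a = 0 -> s1 *: a = 0)
  (g_ker : forall b, g b = 0 -> exists a, s2 *: b = f a)
  (gf : forall a, g (s2 *: f a) = 0)
  (g_im : forall c, exists b, s3 *: c = g b).

Lemma Hom_exact_at_C (phi : {linear C -> E}) :
  (forall b, phi (g b) = 0) -> forall c, s3 *: phi c = 0.
Proof. by move=> phig c; have [b gb] := g_im c; rewrite -linearZ gb phig. Qed.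

Lemma Hom_exact_at_B_ker (psi : {linear B -> E}) : (forall a, psi (f a) = 0) ->
  exists phi : {linear C -> E}, forall b, (s2 * s3) *: psi b = phi (g b).
Proof.
move=> psif.
have [phi phiP] : exists phi : {linear C -> E},
    forall c b, s3 *: c = g b -> phi c = s2 *: psi b.
  apply: (linear_of_relation (Rel := fun c b => s3 *: c = g b)).
  - by move=> a b b'; rewrite linearP scalerDr !scalerA mulrC.
  - exact: g_im.
  - move=> a c c' b b' gb gb'.
    by rewrite linearP -gb -gb' scalerDr !scalerA mulrC.
  - move=> c b b' gb gb'.
    have [a fa] : exists a, s2 *: (b - b') = f a.
      by apply: g_ker; rewrite linearB -gb -gb' subrr.
    by apply/eqP; rewrite -subr_eq0 -scalerBr -linearB -linearZ fa psif.
exists phi => b; rewrite (phiP (g b) (s3 *: b)); last by rewrite linearZ.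
by rewrite linearZ scalerA.
Qed.

Lemma Hom_exact_at_B_im (phi : {linear C -> E}) a : (s2 * s3) *: phi (g (f a)) = 0.
Proof.
by rewrite mulrC -scalerA -[s2 *: phi _]linearZ -[s2 *: g _]linearZ gf linear0 ?scaler0.
Qed.

Section Pushout.
Variables (r : proj_resolution C) (a0 : {linear pr_mod r 0 -> B}) (a1 : {linear pr_mod r 1 -> A}).
Hypotheses (a0P : forall x, g (a0 x) = s3 *: pr_eps r x)
  (a1P : forall y, f (a1 y) = s2 *: a0 (pr_d r 0 y)).
Variables (chi : {linear A -> E}) (t : R) (psi0 : {linear pr_mod r 0 -> E}).
Hypothesis psi0P : forall y, t *: chi (s1 *: a1 y) = psi0 (pr_d r 0 y).

(* [pushout_rel b (x, a)]: x lifts g b and s2 s3 b = s2 a0 x + f a; then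
   [pushout_val (x, a)] is the value prescribed by psi0 on P_0 and t chi on A. *)
Definition pushout_rel (b : B) (p : pr_mod r 0 * A) :=
  pr_eps r p.1 = g b /\ s2 *: (s3 *: b - a0 p.1) = f p.2.

Definition pushout_val (p : pr_mod r 0 * A) : E := t *: chi (s1 *: p.2) + psi0 p.1.

Lemma pushout_val_linear : linear pushout_val.
Proof.
move=> a p q; rewrite /pushout_val /= (linearP psi0) [s1 *: _]scalerDr (linearD chi).
rewrite [s1 *: (a *: _)]scalerA [s1 * a]mulrC -scalerA [chi (a *: _)]linearZ !scalerDr.
by rewrite [t *: (a *: _)]scalerA [t * a]mulrC -scalerA addrACA.
Qed.

Lemma pushout_rel_total b : exists p, pushout_rel b p.
Proof.
have [x ex] := pr_eps_surj r (g b).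
have [a fa] : exists a, s2 *: (s3 *: b - a0 x) = f a.
  by apply: g_ker; rewrite linearB linearZ a0P ex subrr.
by exists (x, a).
Qed.

Lemma pushout_rel_linear a b b' p p' :
  pushout_rel b p -> pushout_rel b' p' -> pushout_rel (a *: b + b') (a *: p + p').
Proof.
move=> [e e'] [d d']; split=> /=; first by rewrite (linearP (pr_eps r)) (linearP g) e d.
have -> : s3 *: (a *: b + b') - a0 (a *: p.1 + p'.1) =
    a *: (s3 *: b - a0 p.1) + (s3 *: b' - a0 p'.1).
  by rewrite (linearP a0) scalerDr scalerBr !scalerA [s3 * a]mulrC opprD addrACA.
by rewrite (linearP f) -e' -d' scalerDr !scalerA mulrC.
Qed.

Lemma pushout_val_well_defined b p p' :
  pushout_rel b p -> pushout_rel b p' -> pushout_val p = pushout_val p'.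
Proof.
move=> [e e'] [d d'].
have [y dy] : exists y, p.1 - p'.1 = pr_d r 0 y.
  by apply/pr_exact0; rewrite linearB e d subrr.
have s1_ker : s1 *: (p.2 - p'.2 + a1 y) = 0.
  apply: f_ker; rewrite linearD linearB a1P -dy -e' -d' (linearB a0) -!scalerBr -scalerDr.
  by rewrite [s3 *: b - _]addrC addrKA opprK addrACA addNr subrr addr0 scaler0.
apply/eqP; rewrite -subr_eq0 /pushout_val opprD addrACA -[psi0 _ - _]linearB dy -psi0P.
rewrite -scalerBr -scalerDr -[chi _ - _]linearB -[chi _ + _]linearD.
by rewrite -[s1 *: _ - _]scalerBr -scalerDr s1_ker linear0 scaler0.
Qed.

Lemma pushout_extension :
  exists psi : {linear B -> E}, forall a, (t * s1 * s2 * s3 * s2) *: chi a = psi (f a).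
Proof.
have [Psi PsiP] := linear_of_relation pushout_val_linear pushout_rel_total
  pushout_rel_linear pushout_val_well_defined.
exists (Psi \o *:%R s2) => a /=.
rewrite (PsiP _ (0, (s2 * s3 * s2) *: a)) /pushout_val /=.
  by rewrite linear0 addr0 scalerA [chi (_ *: _)]linearZ scalerA !mulrA.
split=> /=; first by rewrite gf linear0.
by rewrite linear0 subr0 !scalerA [f (_ *: _)]linearZ.
Qed.

End Pushout.

Lemma Hom_exact_at_A (r : proj_resolution C) (t : R) :
  (forall phi : {linear pr_mod r 1 -> E}, (forall y, phi (pr_d r 1 y) = 0) ->
     exists psi : {linear pr_mod r 0 -> E}, forall x, t *: phi x = psi (pr_d r 0 x)) ->
  forall chi : {linear A -> E},
  exists psi : {linear B -> E}, forall a, (t * s1 * s2 * s3 * s2) *: chi a = psi (f a).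
Proof.
move=> ext1 chi.
have [a0 a0P] : exists a0 : {linear pr_mod r 0 -> B},
    forall x, g (a0 x) = ( *:%R s3 \o pr_eps r) x.
  apply: projective_lift (@pr_proj _ _ r 0) _ => x.
  by have [b gb] := g_im (pr_eps r x); exists b.
have [a1 a1P] : exists a1 : {linear pr_mod r 1 -> A},
    forall y, f (a1 y) = ( *:%R s2 \o a0 \o pr_d r 0) y.
  apply: projective_lift (@pr_proj _ _ r 1) _ => y.
  have [a fa] : exists a, s2 *: a0 (pr_d r 0 y) = f a.
    by apply: g_ker; rewrite a0P /= pr_eps_d scaler0.
  by exists a.
have cocycle : forall z, (chi \o *:%R s1 \o a1) (pr_d r 1 z) = 0.
  move=> z /=; have -> : s1 *: a1 (pr_d r 1 z) = 0.
    by apply: f_ker; rewrite a1P /= pr_dd linear0 scaler0.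
  exact: linear0.
have [psi0 psi0P] := ext1 _ cocycle.
exact: (@pushout_extension r a0 a1 a0P a1P chi t psi0 psi0P).
Qed.

End HomSequence.

Section Characterizations.
Variables (R : comPzRingType) (S : {pred R}) (E : lmodType R).

Lemma Ext1_uS_torsion_of_Hom_exact :
  (forall (A B C : lmodType R) (f : {linear A -> B}) (g : {linear B -> C}),
     short_exact f g -> uS_exact_Hom S E f g) ->
  forall M, Ext_uS_torsion S 0 M E.
Proof.
move=> Hom_exact M r.
have [_ [_ [s sS ext]]] := Hom_exact _ _ _ _ _ (kerval_short_exact r).
exists s => // phi phi_cocycle.
have phi_ker : forall y, res_cover r y = 0 -> phi y = 0.
  by move=> y /res_cover_ker [z ->]; apply: phi_cocycle.
have [chi chiP] := factor_through_surjection (@res_cover_surj _ _ r) phi_ker.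
have [psi psiP] := ext chi.
by exists psi => x; rewrite -chiP psiP res_coverE.
Qed.

Lemma Ext_uS_torsion_succ k :
  (forall M, Ext_uS_torsion S k M E) -> forall M, Ext_uS_torsion S k.+1 M E.
Proof. by move=> Ext_k M r; apply: (Ext_k _ (ker_resolution r)). Qed.

Lemma uS_injective_of_Ext1_uS_torsion :
  mult_subset S -> (forall M, Ext_uS_torsion S 0 M E) -> uS_injective S E.
Proof.
move=> [_ SM] Ext1 A B C f g [[s1 s1S f_ker] [[s2 s2S [g_ker gf]] [s3 s3S g_im]]].
split; [|split].
- by exists s3 => //; apply: Hom_exact_at_C.
- exists (s2 * s3); first exact: SM.
  by split; [apply: Hom_exact_at_B_ker | apply: Hom_exact_at_B_im].
- have [t tS ext1] := Ext1 C (free_resolution C).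
  exists (t * s1 * s2 * s3 * s2); first by rewrite !SM.
  exact: (Hom_exact_at_A f_ker g_ker gf g_im ext1).
Qed.

End Characterizations.

Theorem theorem4p3 (R : comPzRingType) (S : {pred R}) (E : lmodType R) :
  mult_subset S ->
  [/\ (uS_injective S E <->
        forall (A B C : lmodType R) (f : {linear A -> B}) (g : {linear B -> C}),
          short_exact f g -> uS_exact_Hom S E f g),
      (uS_injective S E <-> forall M : lmodType R, Ext_uS_torsion S 0 M E) &
      (uS_injective S E <->
        forall (M : lmodType R) (n : nat), (1 <= n)%N -> Ext_uS_torsion S n.-1 M E)].
Proof.
move=> S_mult; have [S1 _] := S_mult.
have inj_Hom : uS_injective S E -> forall (A B C : lmodType R) (f : {linear A -> B})
    (g : {linear B -> C}), short_exact f g -> uS_exact_Hom S E f g.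
  by move=> injE A B C f g fg_exact; apply/injE/short_exact_uS_exact.
have Ext1_inj := uS_injective_of_Ext1_uS_torsion S_mult.
have inj_Ext1 : uS_injective S E -> forall M, Ext_uS_torsion S 0 M E.
  by move=> /inj_Hom /Ext1_uS_torsion_of_Hom_exact.
split; split.
- exact: inj_Hom.
- by move=> /Ext1_uS_torsion_of_Hom_exact /Ext1_inj.
- exact: inj_Ext1.
- exact: Ext1_inj.
- move=> /inj_Ext1 Ext1 M n _.
  have Ext_all : forall k M, Ext_uS_torsion S k M E.
    by elim=> [|k IHk]; [exact: Ext1 | exact: Ext_uS_torsion_succ].
  exact: Ext_all.
- by move=> Extn; apply: Ext1_inj => M; apply: (Extn M 1%N).
Qed.
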